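(* Let $ABC$ be a triangle and let $P$ be a point. Let $H_A, H_B, H_C$ be the orthocenters of the triangles $BPC$, $CPA$, $PAB$ respectively, and let $\triangle_A, \triangle_B, \triangle_C$ denote the triangles $AH_BH_C$, $BH_CH_A$, $CH_AH_B$ respectively. Let $\mathcal{H}_P$ be the rectangular hyperbola circumscribed about $ABC$ and passing through $P$. Then the circumcircles of $\triangle_A, \triangle_B, \triangle_C$ pass through a common point, and this point lies on $\mathcal{H}_P$.
   Context: A rectangular hyperbola is a hyperbola whose asymptotes are perpendicular. All triangles involved are assumed nondegenerate. *)

From mathcomp Require Import all_boot all_order all_algebra.
Set Implicit Arguments. Unset Strict Implicit. Unset Printing Implicit Defensive.
Import Order.TTheory GRing.Theory Num.Theory.
Local Open Scope ring_scope.

Section Geom.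
Variable R : realFieldType.
Definition point := (R * R)%type.

Definition dot (u v : point) : R := u.1 * v.1 + u.2 * v.2.
Definition vsub (u v : point) : point := (u.1 - v.1, u.2 - v.2).
Definition sqdist (u v : point) : R := dot (vsub u v) (vsub u v).

(* oriented area (twice): nonzero iff X, Y, Z are not collinear *)
Definition cross3 (X Y Z : point) : R :=
  (Y.1 - X.1) * (Z.2 - X.2) - (Y.2 - X.2) * (Z.1 - X.1).
Definition nondeg_triangle (X Y Z : point) : Prop := cross3 X Y Z != 0.

(* H is the orthocenter of triangle XYZ: XH ⟂ YZ and YH ⟂ ZX
   (unique for a nondeg_triangle triangle; then ZH ⟂ XY follows). *)
Definition is_orthocenter (H X Y Z : point) : Prop :=
  dot (vsub H X) (vsub Y Z) = 0 /\ dot (vsub H Y) (vsub Z X) = 0.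

Definition on_circumcircle (X Y Z Q : point) : Prop :=
  exists O : point, sqdist O X = sqdist O Y /\ sqdist O X = sqdist O Z
                    /\ sqdist O X = sqdist O Q.

Record conic := Conic { ca : R; cb : R; cc : R; cd : R; ce : R; cf : R }.

Definition on_conic (K : conic) (X : point) : Prop :=
  ca K * X.1 ^+ 2 + cb K * X.1 * X.2 + cc K * X.2 ^+ 2
  + cd K * X.1 + ce K * X.2 + cf K = 0.

(* determinant of the symmetric matrix [[2a, b, d], [b, 2c, e], [d, e, 2f]]
   (8 times the usual conic discriminant); nonzero iff the conic is nondeg_triangle *)
Definition conic_det (K : conic) : R :=
  let a := ca K in let b := cb K in let c := cc K in
  let d := cd K in let e := ce K in let f := cf K in
  (2 * a) * ((2 * c) * (2 * f) - e * e)
  - b * (b * (2 * f) - e * d)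
  + d * (b * e - (2 * c) * d).

(* A rectangular hyperbola: a nondeg_triangle conic whose asymptotic directions
   are perpendicular, i.e. a + c = 0 (then b^2 - 4ac = b^2 + 4a^2 > 0,
   so it is a genuine hyperbola). *)
Definition rect_hyperbola (K : conic) : Prop :=
  ca K + cc K = 0 /\ conic_det K != 0.
End Geom.

From mathcomp Require Import all_boot all_order all_algebra.
From mathcomp Require Import ring lra.
Import Order.TTheory GRing.Theory Num.Theory.
Local Open Scope ring_scope.
Set Implicit Arguments.
Unset Strict Implicit.
Unset Printing Implicit Defensive.

(* Every rectangular conic through A, B, C, P also passes through HA, HB, HC,
   since the orthocenter of a triangle inscribed in a rectangular conic lies on
   it.  The triangles A HB HC, B HC HA and C HA HB share their orthocenter X,
   because the parallels to PA, PB, PC through HA, HB, HC are concurrent.  The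
   centre Z of a rectangular conic through the vertices of a triangle lies on
   its nine-point circle, so the reflection of the orthocenter in Z lies on the
   circumcircle; Q is the reflection of X in Z.  The rectangular conics through
   A, B, C, P form a pencil (whose member may be a pair of perpendicular lines,
   which the argument allows), so they all have centre Z and contain Q.  The
   pencil degenerates only when P is the orthocenter of ABC; then HA = A,
   HB = B, HC = C and Q = A. *)

Section PlaneGeometry.
Variable R : realFieldType.
Implicit Types (A B C P T W X Y Z H : point R) (K : conic R).

Definition cross (u v : point R) : R := u.1 * v.2 - u.2 * v.1.

Lemma cross3E X Y W : cross3 X Y W = cross (vsub Y X) (vsub W X).
Proof. by []. Qed.

Lemma point_neq0 (v : point R) : v != 0 -> (v.1 != 0) || (v.2 != 0).
Proof.
by case: v => v1 v2 /=; rewrite -negb_and; apply: contra => /andP[/eqP-> /eqP->].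
Qed.

Lemma vsub_eq0 X Y : (vsub X Y == 0) = (X == Y).
Proof. by case: X Y => [x1 x2] [y1 y2]; rewrite /vsub !xpair_eqE !subr_eq0. Qed.

Lemma eq0_scaled_nonzero (v : point R) (s : R) :
  v != 0 -> s * v.1 = 0 -> s * v.2 = 0 -> s = 0.
Proof.
move=> /point_neq0/orP[] hv /eqP h1 /eqP h2; [move: h1 | move: h2];
by rewrite mulf_eq0 (negbTE hv) orbF => /eqP.
Qed.

Lemma perp_perp_cross (u v w : point R) :
  v != 0 -> dot u v = 0 -> dot w v = 0 -> cross u w = 0.
Proof.
move=> v0 huv hwv; apply: (eq0_scaled_nonzero v0).
- transitivity (dot u v * w.2 - dot w v * u.2); first by rewrite /cross /dot; ring.
  by rewrite huv hwv !mul0r subrr.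
- transitivity (dot w v * u.1 - dot u v * w.1); first by rewrite /cross /dot; ring.
  by rewrite huv hwv !mul0r subrr.
Qed.

Lemma parallel_perp (u v w : point R) :
  v != 0 -> cross u v = 0 -> dot w v = 0 -> dot u w = 0.
Proof.
move=> v0 huv hwv; apply: (eq0_scaled_nonzero v0).
- transitivity (u.1 * dot w v - w.2 * cross u v); first by rewrite /cross /dot; ring.
  by rewrite huv hwv !mulr0 subrr.
- transitivity (u.2 * dot w v + w.1 * cross u v); first by rewrite /cross /dot; ring.
  by rewrite huv hwv !mulr0 addr0.
Qed.

Lemma perp_independent (u v w : point R) :
  cross v w != 0 -> dot u v = 0 -> dot u w = 0 -> u = 0.
Proof.
move=> hvw huv huw.
have h1 : u.1 * cross v w = 0.
  transitivity (dot u v * w.2 - dot u w * v.2); first by rewrite /cross /dot; ring.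
  by rewrite huv huw !mul0r subrr.
have h2 : u.2 * cross v w = 0.
  transitivity (dot u w * v.1 - dot u v * w.1); first by rewrite /cross /dot; ring.
  by rewrite huv huw !mul0r subrr.
move/eqP: h1 h2 => + /eqP; rewrite !mulf_eq0 (negbTE hvw) !orbF => /eqP h1 /eqP h2.
by rewrite [u]surjective_pairing h1 h2.
Qed.

Lemma nondeg_triangle_neq X Y W :
  nondeg_triangle X Y W -> [/\ X != Y, Y != W & W != X].
Proof.
rewrite /nondeg_triangle /cross3 => hD.
by split; apply: contraNneq hD => ->; apply/eqP; ring.
Qed.

Definition orthocenter X Y W : point R :=
  let u := vsub Y W in let v := vsub W X in
  let r1 := dot X u in let r2 := dot Y v in let D := cross3 X Y W in
  ((r1 * v.2 - u.2 * r2) / D, (u.1 * r2 - r1 * v.1) / D).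

Lemma orthocenterP X Y W :
  nondeg_triangle X Y W -> is_orthocenter (orthocenter X Y W) X Y W.
Proof.
case: X Y W => [x1 x2] [y1 y2] [w1 w2].
rewrite /nondeg_triangle /is_orthocenter /orthocenter /cross3 /dot /vsub /= => hD.
by split; field.
Qed.

Lemma orthocenter_unique H X Y W :
  nondeg_triangle X Y W -> is_orthocenter H X Y W -> H = orthocenter X Y W.
Proof.
move=> hD hH; have [e1 e2] := hH; have [f1 f2] := orthocenterP hD.
apply/eqP; rewrite -vsub_eq0; apply/eqP.
apply: (perp_independent (v := vsub Y W) (w := vsub W X)).
- move: hD; rewrite /nondeg_triangle /cross3 /cross /vsub /=.
  by apply: contra_neq => <-; ring.
- by move: e1 f1; rewrite /dot /vsub /= => e1 f1; lra.
- by move: e2 f2; rewrite /dot /vsub /= => e2 f2; lra.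
Qed.

Lemma is_orthocenter_inj H H' X Y W : nondeg_triangle X Y W ->
  is_orthocenter H X Y W -> is_orthocenter H' X Y W -> H = H'.
Proof.
by move=> hD hH hH'; rewrite (orthocenter_unique hD hH) (orthocenter_unique hD hH').
Qed.

Lemma is_orthocenter_third H X Y W :
  is_orthocenter H X Y W -> dot (vsub H W) (vsub X Y) = 0.
Proof. by rewrite /is_orthocenter /dot /vsub /= => -[e1 e2]; lra. Qed.

Lemma is_orthocenter_rot H X Y W :
  is_orthocenter H X Y W -> is_orthocenter H Y W X.
Proof. by move=> hH; split; [case: hH | exact: is_orthocenter_third]. Qed.

Lemma is_orthocenter_swap H X Y W :
  is_orthocenter H X Y W -> is_orthocenter H Y X W.
Proof. by rewrite /is_orthocenter /dot /vsub /= => -[e1 e2]; split; lra. Qed.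

(* Euler's relation [H = X + Y + W - 2 O]. *)
Definition circumcenter X Y W : point R :=
  let H := orthocenter X Y W in
  ((X.1 + Y.1 + W.1 - H.1) / 2, (X.2 + Y.2 + W.2 - H.2) / 2).

Lemma circumcenter_eqdist X Y W : nondeg_triangle X Y W ->
  sqdist (circumcenter X Y W) Y = sqdist (circumcenter X Y W) X /\
  sqdist (circumcenter X Y W) W = sqdist (circumcenter X Y W) X.
Proof.
have two_neq0 : (2 : R) != 0 by rewrite pnatr_eq0.
case: X Y W => [x1 x2] [y1 y2] [w1 w2].
rewrite /nondeg_triangle /circumcenter /orthocenter /sqdist /cross3 /dot /vsub /= => hD.
by split; field.
Qed.

Lemma on_circumcircle_eqdist X Y W T : nondeg_triangle X Y W ->
  sqdist (circumcenter X Y W) T = sqdist (circumcenter X Y W) X ->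
  on_circumcircle X Y W T.
Proof.
move=> hD hT; have [hY hW] := circumcenter_eqdist hD.
by exists (circumcenter X Y W).
Qed.

Lemma on_circumcircle_vertices X Y W : nondeg_triangle X Y W ->
  [/\ on_circumcircle X Y W X, on_circumcircle X Y W Y & on_circumcircle X Y W W].
Proof.
move=> hD; have [hY hW] := circumcenter_eqdist hD.
by split; apply: on_circumcircle_eqdist.
Qed.

Definition conic_val K T : R :=
  ca K * T.1 ^+ 2 + cb K * T.1 * T.2 + cc K * T.2 ^+ 2
  + cd K * T.1 + ce K * T.2 + cf K.

Definition is_center K Z : Prop :=
  2 * ca K * Z.1 + cb K * Z.2 + cd K = 0 /\ cb K * Z.1 + 2 * cc K * Z.2 + ce K = 0.

Definition halfturn Z T : point R := (2 * Z.1 - T.1, 2 * Z.2 - T.2).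

(* The traceless quadratic forms at [T - Z]: a rectangular conic centred at [Z]
   is a level set of a linear form in these coordinates. *)
Definition rect_coords Z T : point R :=
  let t := vsub T Z in (t.1 ^+ 2 - t.2 ^+ 2, t.1 * t.2).

Lemma on_conic_halfturn K Z T :
  is_center K Z -> on_conic K T -> on_conic K (halfturn Z T).
Proof.
case=> g1 g2 hT; rewrite /on_conic.
transitivity (conic_val K T + 2 * ((2 * ca K * Z.1 + cb K * Z.2 + cd K) * (Z.1 - T.1)
   + (cb K * Z.1 + 2 * cc K * Z.2 + ce K) * (Z.2 - T.2))).
  by rewrite /conic_val /halfturn /=; ring.
by rewrite [conic_val K T]hT g1 g2 !mul0r addr0 mulr0 addr0.
Qed.

Lemma conic_val_centered K Z T : ca K + cc K = 0 -> is_center K Z ->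
  conic_val K T = conic_val K Z + dot (ca K, cb K) (rect_coords Z T).
Proof.
move=> hr [g1 g2].
transitivity (conic_val K Z + dot (ca K, cb K) (rect_coords Z T)
  + (2 * ca K * Z.1 + cb K * Z.2 + cd K) * (T.1 - Z.1)
  + (cb K * Z.1 + 2 * cc K * Z.2 + ce K) * (T.2 - Z.2)
  + (ca K + cc K) * (T.2 - Z.2) ^+ 2).
  by rewrite /conic_val /rect_coords /dot /vsub /=; ring.
by rewrite g1 g2 hr !mul0r !addr0.
Qed.

Lemma rect_coords_collinear K Z X Y W :
  ca K + cc K = 0 -> (ca K, cb K) != 0 -> is_center K Z ->
  on_conic K X -> on_conic K Y -> on_conic K W ->
  cross3 (rect_coords Z X) (rect_coords Z Y) (rect_coords Z W) = 0.
Proof.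
move=> hr hab hZ hX hY hW.
have level T : on_conic K T -> dot (ca K, cb K) (rect_coords Z T) = - conic_val K Z.
  rewrite /on_conic -/(conic_val K T) (conic_val_centered T hr hZ) => /eqP.
  by rewrite addrC addr_eq0 => /eqP.
rewrite cross3E; apply: (perp_perp_cross hab).
- by move: (level _ hX) (level _ hY); rewrite /dot /vsub /= => eX eY; lra.
- by move: (level _ hX) (level _ hW); rewrite /dot /vsub /= => eX eW; lra.
Qed.

(* Both sides vanish exactly when [Z] lies on the nine-point circle of [X Y W],
   the image of the circumcircle under the homothety of ratio 1/2 centred at the
   orthocenter. *)
Lemma nine_point_identity X Y W Z : nondeg_triangle X Y W ->
  sqdist (circumcenter X Y W) (halfturn Z (orthocenter X Y W))
  - sqdist (circumcenter X Y W) X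
  = 2 * cross3 (rect_coords Z X) (rect_coords Z Y) (rect_coords Z W) / cross3 X Y W.
Proof.
have two_neq0 : (2 : R) != 0 by rewrite pnatr_eq0.
case: X Y W Z => [x1 x2] [y1 y2] [w1 w2] [z1 z2].
rewrite /nondeg_triangle /circumcenter /orthocenter /halfturn /rect_coords /sqdist.
rewrite /cross3 /dot /vsub /= => hD.
by field.
Qed.

Lemma on_circumcircle_halfturn K Z X Y W H :
  ca K + cc K = 0 -> (ca K, cb K) != 0 -> is_center K Z ->
  on_conic K X -> on_conic K Y -> on_conic K W ->
  nondeg_triangle X Y W -> is_orthocenter H X Y W ->
  on_circumcircle X Y W (halfturn Z H).
Proof.
move=> hr hab hZ hX hY hW hD hH.
apply: on_circumcircle_eqdist => //; apply/eqP; rewrite -subr_eq0.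
by rewrite (orthocenter_unique hD hH) nine_point_identity //
  (rect_coords_collinear hr hab hZ hX hY hW) mulr0 mul0r.
Qed.

(* Barycentric interpolation at the orthocenter is exact for traceless
   quadratic forms. *)
Lemma conic_val_orthocenter K X Y W :
  ca K + cc K = 0 -> nondeg_triangle X Y W ->
  let H := orthocenter X Y W in
  conic_val K H * cross3 X Y W =
  cross3 H Y W * conic_val K X + cross3 X H W * conic_val K Y
  + cross3 X Y H * conic_val K W.
Proof.
case: X Y W => [x1 x2] [y1 y2] [w1 w2]; case: K => a b c d e f /= hr.
have -> : c = - a by apply/eqP; rewrite -subr_eq0 opprK addrC hr.
rewrite /nondeg_triangle /conic_val /orthocenter /cross3 /dot /vsub /= => hD.
by field.
Qed.

Lemma on_conic_orthocenter K X Y W H : ca K + cc K = 0 ->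
  on_conic K X -> on_conic K Y -> on_conic K W ->
  nondeg_triangle X Y W -> is_orthocenter H X Y W -> on_conic K H.
Proof.
move=> hr hX hY hW hD hH; rewrite (orthocenter_unique hD hH).
have /= := conic_val_orthocenter hr hD.
rewrite [conic_val K X]hX [conic_val K Y]hY [conic_val K W]hW !mulr0 !addr0.
by move/eqP; rewrite mulf_eq0 (negbTE hD) orbF => /eqP.
Qed.

(* The equations of the parallels to [P A], [P B], [P C] through [HA], [HB],
   [HC] are linearly dependent, so these lines are concurrent. *)
Lemma orthocenter_parallels_concur A B C P HA HB HC X :
  is_orthocenter HA P B C -> is_orthocenter HB P C A -> is_orthocenter HC P A B ->
  cross3 B P C * cross (vsub X HA) (vsub A P)
  + cross3 C P A * cross (vsub X HB) (vsub B P)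
  + cross3 A P B * cross (vsub X HC) (vsub C P) = 0.
Proof.
move=> [a1 a2] [b1 b2] [c1 c2].
pose pa := vsub A P; pose pb := vsub B P; pose pc := vsub C P.
transitivity
  ((dot (vsub HA P) (vsub B C) + dot (vsub HA B) (vsub C P)) * dot pc pa
     - dot (vsub HA B) (vsub C P) * dot pa pb
   + (dot (vsub HB P) (vsub C A) + dot (vsub HB C) (vsub A P)) * dot pa pb
     - dot (vsub HB C) (vsub A P) * dot pb pc
   + (dot (vsub HC P) (vsub A B) + dot (vsub HC A) (vsub B P)) * dot pb pc
     - dot (vsub HC A) (vsub B P) * dot pc pa).
  by rewrite /pa /pb /pc /cross3 /cross /dot /vsub /=; ring.
by rewrite a1 a2 b1 b2 c1 c2; ring.
Qed.

(* [X HB] and [X HC] are parallel to [P B] and [P C], each pair being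
   perpendicular to a common side; the concurrence lemma then makes [X HA]
   parallel to [P A], which gives two altitudes of [B HC HA] through [X]. *)
Lemma orthocenter_next A B C P HA HB HC X :
  nondeg_triangle B P C -> A != P ->
  is_orthocenter HA P B C -> is_orthocenter HB P C A -> is_orthocenter HC P A B ->
  nondeg_triangle A HB HC -> is_orthocenter X A HB HC -> is_orthocenter X B HC HA.
Proof.
move=> hBPC nAP oA oB oC nA oX.
have [_ nPC _] := nondeg_triangle_neq hBPC.
have [nAHB _ nHCA] := nondeg_triangle_neq nA.
have neq0 (U V : point R) : U != V -> vsub U V != 0 by rewrite vsub_eq0.
have parB : cross (vsub X HB) (vsub B P) = 0.
  apply: (perp_perp_cross (neq0 _ _ nHCA)); first by case: oX.
  by case: oC => _ h; rewrite -h /dot /vsub /=; ring.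
have parC : cross (vsub X HC) (vsub C P) = 0.
  apply: (perp_perp_cross (neq0 _ _ nAHB)).
    by rewrite -(is_orthocenter_third oX) /dot /vsub /=; ring.
  by rewrite -(is_orthocenter_third oB) /dot /vsub /=; ring.
have parA : cross (vsub X HA) (vsub A P) = 0.
  have := orthocenter_parallels_concur X oA oB oC.
  rewrite parB parC !mulr0 !addr0 => /eqP; rewrite mulf_eq0 orbC => /orP[/eqP //|].
  by rewrite (negbTE hBPC).
do 2 apply: is_orthocenter_rot; split.
- apply: (parallel_perp (neq0 C P _) parC); first by rewrite eq_sym.
  by case: oA.
- apply: (parallel_perp (neq0 _ _ nAP) parA).
  by rewrite -(is_orthocenter_third oC) /dot /vsub /=; ring.
Qed.

Lemma common_orthocenter A B C P HA HB HC :
  nondeg_triangle B P C -> nondeg_triangle C P A ->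
  is_orthocenter HA B P C -> is_orthocenter HB C P A -> is_orthocenter HC P A B ->
  nondeg_triangle A HB HC -> nondeg_triangle B HC HA ->
  let X := orthocenter A HB HC in
  [/\ is_orthocenter X A HB HC, is_orthocenter X B HC HA & is_orthocenter X C HA HB].
Proof.
move=> hBPC hCPA oA oB oC nA nB X.
have nAP : A != P by rewrite eq_sym; case: (nondeg_triangle_neq hCPA).
have [nBP _ _] := nondeg_triangle_neq hBPC.
have oXA : is_orthocenter X A HB HC := orthocenterP nA.
have oA' := is_orthocenter_swap oA; have oB' := is_orthocenter_swap oB.
have oXB := orthocenter_next hBPC nAP oA' oB' oC nA oXA.
by split=> //; apply: orthocenter_next hCPA nBP oB' oC oA' nB oXB.
Qed.

Lemma orthocentric_system A B C P : is_orthocenter P B C A ->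
  [/\ is_orthocenter A B P C, is_orthocenter B C P A & is_orthocenter C P A B].
Proof. by rewrite /is_orthocenter /dot /vsub /= => -[e1 e2]; do !split; lra. Qed.

Definition det3 (a1 b1 c1 a2 b2 c2 a3 b3 c3 : R) : R :=
  a1 * (b2 * c3 - b3 * c2) - b1 * (a2 * c3 - a3 * c2) + c1 * (a2 * b3 - a3 * b2).

Lemma det3_kernel (a1 b1 c1 a2 b2 c2 a3 b3 c3 x y z : R) :
  det3 a1 b1 c1 a2 b2 c2 a3 b3 c3 != 0 ->
  a1 * x + b1 * y + c1 * z = 0 -> a2 * x + b2 * y + c2 * z = 0 ->
  a3 * x + b3 * y + c3 * z = 0 -> [/\ x = 0, y = 0 & z = 0].
Proof.
set D := det3 _ _ _ _ _ _ _ _ _ => hD e1 e2 e3.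
have cramer t : D * t = 0 -> t = 0.
  by move/eqP; rewrite mulf_eq0 (negbTE hD) => /eqP.
split; apply: cramer.
- transitivity ((b2 * c3 - b3 * c2) * (a1 * x + b1 * y + c1 * z)
    - (b1 * c3 - b3 * c1) * (a2 * x + b2 * y + c2 * z)
    + (b1 * c2 - b2 * c1) * (a3 * x + b3 * y + c3 * z)); first by rewrite /D /det3; ring.
  by rewrite e1 e2 e3 !mulr0 subrr addr0.
- transitivity (- (a2 * c3 - a3 * c2) * (a1 * x + b1 * y + c1 * z)
    + (a1 * c3 - a3 * c1) * (a2 * x + b2 * y + c2 * z)
    - (a1 * c2 - a2 * c1) * (a3 * x + b3 * y + c3 * z)); first by rewrite /D /det3; ring.
  by rewrite e1 e2 e3 !mulr0 addr0 subrr.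
- transitivity ((a2 * b3 - a3 * b2) * (a1 * x + b1 * y + c1 * z)
    - (a1 * b3 - a3 * b1) * (a2 * x + b2 * y + c2 * z)
    + (a1 * b2 - a2 * b1) * (a3 * x + b3 * y + c3 * z)); first by rewrite /D /det3; ring.
  by rewrite e1 e2 e3 !mulr0 subrr addr0.
Qed.

Definition rect_conic_at A (a b d e : R) : conic R :=
  Conic a b (- a) (d - 2 * a * A.1 - b * A.2) (e - b * A.1 + 2 * a * A.2)
    (a * (A.1 ^+ 2 - A.2 ^+ 2) + b * A.1 * A.2 - d * A.1 - e * A.2).

Lemma on_rect_conic_atP A a b d e T :
  on_conic (rect_conic_at A a b d e) T <->
  a * (rect_coords A T).1 + b * (rect_coords A T).2
  + d * (vsub T A).1 + e * (vsub T A).2 = 0.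
Proof.
rewrite /on_conic -/(conic_val (rect_conic_at A a b d e) T).
suff -> : conic_val (rect_conic_at A a b d e) T =
  a * (rect_coords A T).1 + b * (rect_coords A T).2
  + d * (vsub T A).1 + e * (vsub T A).2 by [].
by rewrite /conic_val /rect_coords /vsub /=; ring.
Qed.

Lemma rect_conic_at_of_through A K : ca K + cc K = 0 -> on_conic K A ->
  exists a b d e, K = rect_conic_at A a b d e.
Proof.
case: K => a b c d e f /= hr hA.
have ec : c = - a by apply/eqP; rewrite -subr_eq0 opprK addrC hr.
exists a, b, (2 * a * A.1 + b * A.2 + d), (b * A.1 + 2 * c * A.2 + e).
move: hA; rewrite /on_conic /rect_conic_at ec /= => hA.
by congr Conic; lra.
Qed.

Definition rect_center A (a b d e : R) : point R :=
  let r := 4 * a ^+ 2 + b ^+ 2 in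
  (A.1 - (2 * a * d + b * e) / r, A.2 - (b * d - 2 * a * e) / r).

Lemma sqr_sum_neq0 (a b : R) : (a, b) != 0 -> 4 * a ^+ 2 + b ^+ 2 != 0.
Proof.
move/point_neq0 => /= hab.
have ha : 0 <= 4 * a ^+ 2 by rewrite mulr_ge0 ?ler0n ?sqr_ge0.
by rewrite paddr_eq0 ?sqr_ge0 // mulf_eq0 pnatr_eq0 /= !sqrf_eq0 negb_and.
Qed.

Lemma is_center_rect_center A a b d e : (a, b) != 0 ->
  is_center (rect_conic_at A a b d e) (rect_center A a b d e).
Proof. by move/sqr_sum_neq0 => hr; rewrite /is_center /=; split; field. Qed.

Lemma is_center_rect_conic_atZ A a b d e l Z :
  is_center (rect_conic_at A a b d e) Z ->
  is_center (rect_conic_at A (l * a) (l * b) (l * d) (l * e)) Z.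
Proof.
rewrite /is_center /= => -[g1 g2]; split.
- by rewrite -[RHS](mulr0 l) -g1; ring.
- by rewrite -[RHS](mulr0 l) -g2; ring.
Qed.

Section RectangularPencil.
Variables A B C P : point R.

Let p T := (rect_coords A T).1.
Let q T := (rect_coords A T).2.
Let x T := (vsub T A).1.
Let y T := (vsub T A).2.

(* Cofactors of the linear system in [(a, b, d, e)] saying that
   [rect_conic_at A a b d e] passes through [B], [C] and [P]. *)
Definition pencil_a := det3 (q B) (x B) (y B) (q C) (x C) (y C) (q P) (x P) (y P).
Definition pencil_b := - det3 (p B) (x B) (y B) (p C) (x C) (y C) (p P) (x P) (y P).
Definition pencil_d := det3 (p B) (q B) (y B) (p C) (q C) (y C) (p P) (q P) (y P).
Definition pencil_e := - det3 (p B) (q B) (x B) (p C) (q C) (x C) (p P) (q P) (x P).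

Definition pencil_conic := rect_conic_at A pencil_a pencil_b pencil_d pencil_e.
Definition pencil_center := rect_center A pencil_a pencil_b pencil_d pencil_e.

Lemma pencil_conic_through : [/\ on_conic pencil_conic A, on_conic pencil_conic B,
  on_conic pencil_conic C & on_conic pencil_conic P].
Proof.
by split; apply/on_rect_conic_atP;
  rewrite /pencil_a /pencil_b /pencil_d /pencil_e /p /q /x /y /det3 /rect_coords /vsub /=;
  ring.
Qed.

Lemma pencil_unique a b d e : (pencil_a, pencil_b) != 0 ->
  on_conic (rect_conic_at A a b d e) B -> on_conic (rect_conic_at A a b d e) C ->
  on_conic (rect_conic_at A a b d e) P ->
  exists l, [/\ a = l * pencil_a, b = l * pencil_b, d = l * pencil_d & e = l * pencil_e].
Proof.
have [_ /on_rect_conic_atP gB /on_rect_conic_atP gC /on_rect_conic_atP gP] :=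
  pencil_conic_through.
move=> hab /on_rect_conic_atP hB /on_rect_conic_atP hC /on_rect_conic_atP hP.
have [ha | /negPn/eqP ha] := boolP (pencil_a != 0).
  have row (T : point R) : a * p T + b * q T + d * x T + e * y T = 0 ->
      pencil_a * p T + pencil_b * q T + pencil_d * x T + pencil_e * y T = 0 ->
      q T * (pencil_a * b - a * pencil_b) + x T * (pencil_a * d - a * pencil_d)
      + y T * (pencil_a * e - a * pencil_e) = 0.
    move=> h g; transitivity (pencil_a * (a * p T + b * q T + d * x T + e * y T)
      - a * (pencil_a * p T + pencil_b * q T + pencil_d * x T + pencil_e * y T)).
      by ring.
    by rewrite h g !mulr0 subrr.
  have [/subr0_eq eb /subr0_eq ed /subr0_eq ee] :=
    det3_kernel ha (row _ hB gB) (row _ hC gC) (row _ hP gP).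
  by exists (a / pencil_a); split; apply: (mulfI ha); rewrite ?eb ?ed ?ee; field.
have hb : pencil_b != 0 by move: hab; rewrite ha /= => /point_neq0; rewrite eqxx.
have row (T : point R) : a * p T + b * q T + d * x T + e * y T = 0 ->
    pencil_a * p T + pencil_b * q T + pencil_d * x T + pencil_e * y T = 0 ->
    p T * (pencil_b * a - b * pencil_a) + x T * (pencil_b * d - b * pencil_d)
    + y T * (pencil_b * e - b * pencil_e) = 0.
  move=> h g; transitivity (pencil_b * (a * p T + b * q T + d * x T + e * y T)
    - b * (pencil_a * p T + pencil_b * q T + pencil_d * x T + pencil_e * y T)).
    by ring.
  by rewrite h g !mulr0 subrr.
have hb' : det3 (p B) (x B) (y B) (p C) (x C) (y C) (p P) (x P) (y P) != 0.
  by rewrite -oppr_eq0.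
have [/subr0_eq ea /subr0_eq ed /subr0_eq ee] :=
  det3_kernel hb' (row _ hB gB) (row _ hC gC) (row _ hP gP).
by exists (b / pencil_b); split; apply: (mulfI hb); rewrite ?ea ?ed ?ee; field.
Qed.

Lemma is_center_pencil K : (pencil_a, pencil_b) != 0 -> ca K + cc K = 0 ->
  on_conic K A -> on_conic K B -> on_conic K C -> on_conic K P ->
  is_center K pencil_center.
Proof.
move=> hab hr hA; have [a [b [d [e ->]]]] := rect_conic_at_of_through hr hA.
move=> hB hC hP; have [l [-> -> -> ->]] := pencil_unique hab hB hC hP.
exact/is_center_rect_conic_atZ/is_center_rect_center.
Qed.

Lemma pencil_degenerate_orthocenter :
  nondeg_triangle A B C -> nondeg_triangle C P A -> nondeg_triangle P A B ->
  (pencil_a, pencil_b) = 0 -> is_orthocenter P B C A.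
Proof.
rewrite /nondeg_triangle => hABC hCPA hPAB [ha hb].
split.
- have : cross3 C P A * dot (vsub P B) (vsub C A) * cross3 A B C
         = (x C ^+ 2 - y C ^+ 2) * pencil_a + x C * y C * pencil_b.
    rewrite /pencil_a /pencil_b /p /q /x /y /det3 /rect_coords /cross3 /dot /vsub /=.
    by ring.
  rewrite ha hb !mulr0 addr0 => /eqP.
  by rewrite !mulf_eq0 (negbTE hCPA) (negbTE hABC) orbF => /eqP.
- have : cross3 P A B * dot (vsub P C) (vsub A B) * cross3 A B C
         = - ((x B ^+ 2 - y B ^+ 2) * pencil_a + x B * y B * pencil_b).
    rewrite /pencil_a /pencil_b /p /q /x /y /det3 /rect_coords /cross3 /dot /vsub /=.
    by ring.
  rewrite ha hb !mulr0 addr0 oppr0 => /eqP.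
  by rewrite !mulf_eq0 (negbTE hPAB) (negbTE hABC) orbF => /eqP.
Qed.

End RectangularPencil.

End PlaneGeometry.

Theorem corollary2p3 (R : realFieldType) (A B C P HA HB HC : point R) :
  nondeg_triangle A B C ->
  nondeg_triangle B P C -> nondeg_triangle C P A -> nondeg_triangle P A B ->
  is_orthocenter HA B P C -> is_orthocenter HB C P A -> is_orthocenter HC P A B ->
  nondeg_triangle A HB HC -> nondeg_triangle B HC HA -> nondeg_triangle C HA HB ->
  exists Q : point R,
    [/\ on_circumcircle A HB HC Q, on_circumcircle B HC HA Q,
        on_circumcircle C HA HB Q &
        forall K : conic R, rect_hyperbola K ->
          on_conic K A -> on_conic K B -> on_conic K C -> on_conic K P ->
          on_conic K Q].
Proof.
move=> hABC hBPC hCPA hPAB oA oB oC nA nB nC.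
have [hab | hab] := eqVneq (pencil_a A B C P, pencil_b A B C P) 0.
  have [oA' oB' oC'] :=
    orthocentric_system (pencil_degenerate_orthocenter hABC hCPA hPAB hab).
  rewrite -(is_orthocenter_inj hBPC oA' oA) -(is_orthocenter_inj hCPA oB' oB)
    -(is_orthocenter_inj hPAB oC' oC) in nA nB nC *.
  exists A; split=> //.
  - by case: (on_circumcircle_vertices nA).
  - by case: (on_circumcircle_vertices nB).
  - by case: (on_circumcircle_vertices nC).
have [oXA oXB oXC] := common_orthocenter hBPC hCPA oA oB oC nA nB.
set X := orthocenter A HB HC in oXA oXB oXC *.
have [kA kB kC kP] := pencil_conic_through A B C P.
have rK0 : ca (pencil_conic A B C P) + cc (pencil_conic A B C P) = 0 by apply: addrN.
have kHA := on_conic_orthocenter rK0 kB kP kC hBPC oA.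
have kHB := on_conic_orthocenter rK0 kC kP kA hCPA oB.
have kHC := on_conic_orthocenter rK0 kP kA kB hPAB oC.
have cZ : is_center (pencil_conic A B C P) (pencil_center A B C P).
  exact: is_center_rect_center.
exists (halfturn (pencil_center A B C P) X); split.
- exact: on_circumcircle_halfturn rK0 hab cZ kA kHB kHC nA oXA.
- exact: on_circumcircle_halfturn rK0 hab cZ kB kHC kHA nB oXB.
- exact: on_circumcircle_halfturn rK0 hab cZ kC kHA kHB nC oXC.
move=> K [rK _] hA hB hC hP.
apply: on_conic_halfturn (is_center_pencil hab rK hA hB hC hP) _.
apply: (on_conic_orthocenter rK hA _ _ nA oXA).
- exact: on_conic_orthocenter rK hC hP hA hCPA oB.
- exact: on_conic_orthocenter rK hP hA hB hPAB oC.
Qed.
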